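(* Assume that at every optimizer of problem (P4) the density components satisfy $\rho^{(l)}_e(t)\ge\epsilon(\beta)$ for all $e,t,l$. Let (P4') be the problem obtained from (P4) by adding variables $\vartheta^{(l)}_e(t)\in\mathbb{R}$, adding the constraints $(\vartheta^{(l)}_e(t))^2\le\nu^{(l)}_e(t)\rho^{(l)}_e(t)$ for all $e,t,l$, and replacing the objective term $\frac1N\sum_{e,t,l}\nu^{(l)}_e(t)\rho^{(l)}_e(t)$ by $\frac1N\sum_{e,t,l}(\vartheta^{(l)}_e(t))^2$. Then (P4') is equivalent to (P4) in the sense that their optimal objective values coincide and the set of optimizers of (P4) is the projection of the set of optimizers of (P4'). Further, for any feasible point of (P4'), with $u_e(t)=\sum_i\gamma^{(i)}x_{e,i}(t)$ and $\hat J$ the (P4') objective value at that point, one has $\mathrm{Prob}^N\big(\mathbb{E}_{\mathbb{P}(u)}[H(u;\rho)]\ge\hat J\big)\ge1-\beta$.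
   Context: Data: integers $n,T,N\ge1$, $\mathcal E=\{1,\dots,n\}$, $\mathcal T=\{0,\dots,T-1\}$, $\mathcal L=\{1,\dots,N\}$, $\mathcal O=\{1,\dots,m\}$; speed-limit values $0<\gamma^{(1)}<\dots<\gamma^{(m)}$, $\Gamma=\{\gamma^{(i)}\}$; for each $e$: $h_e>0$, $\bar\rho_e>0$, $\bar f_e>0$, $\bar u_e>0$ with $\bar u_e\bar\rho_e>\bar f_e$, $\tau_e=\bar f_e/(\bar u_e\bar\rho_e-\bar f_e)$, $\rho^c_e(v)=\tau_e\bar\rho_e\bar u_e/(\tau_e\bar u_e+v)$; constant $\bar\eta>0$. Random vector $\varpi=(\omega,\rho(0),r^{in},r^{o})$ ($\omega(t)\ge0$, $\rho(0)\in\mathbb{R}^n_{\ge0}$, $r^{in}_e(t),r^o_e(t)\in[0,1)$) with light-tailed distribution $\mathbb{P}_\varpi$; $\varpi^{(l)}=(\omega^{(l)},\rho^{(l)}(0),r^{in,(l)},r^{o,(l)})$, $l\in\mathcal L$, are $N$ i.i.d. samples; $\kappa^{(l)}_e(t)=\frac{1-r^{o,(l)}_{e-1}(t)}{1-r^{in,(l)}_e(t)}$. For $u\in\Gamma^{nT}$, $\mathbb{P}(u)$ is the law of the trajectory $\rho$ given by $\rho_1(t+1)=\rho_1(t)+h_1(\omega(t)-u_1(t)\rho_1(t))$, $\rho_e(t+1)=\rho_e(t)+h_e\kappa_e(t)u_{e-1}(t)\rho_{e-1}(t)-h_eu_e(t)\rho_e(t)$ ($e\ge2$) when $\varpi\sim\mathbb{P}_\varpi$,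 supported on $\{\rho:0\le\rho_e(t)\le\rho^c_e(u_e(t))\}$; $H(u;\rho)=\frac1T\sum_{e,t}\rho_e(t)u_e(t)$; $\beta\in(0,1)$ and $\epsilon(\beta)>0$ is a Wasserstein radius (1-norm) such that, with $\hat{\mathbb{P}}(u)$ the empirical distribution of the sample trajectories, $\mathbb{P}(u)$ lies in the Wasserstein ball of radius $\epsilon(\beta)$ around $\hat{\mathbb{P}}(u)$ intersected with the light-tailed distributions on its support with $\mathrm{Prob}^N$-probability at least $1-\beta$; $\mathrm{Prob}^N$ is the product probability over the samples. Problem (P4): maximize $-\lambda\epsilon(\beta)-\frac1N\sum_{e,t,l}\bar f_e\bar\rho_e\eta^{(l)}_e(t)+\frac1N\sum_{e,t,l}\nu^{(l)}_e(t)\rho^{(l)}_e(t)$ over $x_{e,i}(t),y^{(l)}_{e,i}(t),z^{(l)}_{e,i}(t),\rho^{(l)}_e(t),\lambda,\mu^{(l)}_e(t),\nu^{(l)}_e(t),\eta^{(l)}_e(t)$ subject to, for all $e,i,t,l$: $x_{e,i}(t)\in\{0,1\}$, $\sum_ix_{e,i}(t)=1$, $\gamma^{(1)}\le\sum_i\gamma^{(i)}x_{e,i}(t)\le\gamma^{(m)}$; $0\le z^{(l)}_{e,i}(t)\le\bar\eta x_{e,i}(t)$, $\eta^{(l)}_e(t)-\bar\eta(1-x_{e,i}(t))\le z^{(l)}_{e,i}(t)\le\eta^{(l)}_e(t)$, $0\le y^{(l)}_{e,i}(t)\le\bar\rho_ex_{e,i}(t)$, $\rho^{(l)}_e(t)-\bar\rho_e(1-x_{e,i}(t))\le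 y^{(l)}_{e,i}(t)\le\rho^{(l)}_e(t)$; $\rho^{(l)}_1(t+1)=\rho^{(l)}_1(t)+h_1\omega^{(l)}(t)-h_1\sum_i\gamma^{(i)}y^{(l)}_{1,i}(t)$; for $e\ge2$: $\rho^{(l)}_e(t+1)=\rho^{(l)}_e(t)+h_e\kappa^{(l)}_e(t)\sum_i\gamma^{(i)}y^{(l)}_{e-1,i}(t)-h_e\sum_i\gamma^{(i)}y^{(l)}_{e,i}(t)$ and $\kappa^{(l)}_e(t)\sum_i\gamma^{(i)}y^{(l)}_{e-1,i}(t)\le\min\{\bar f_e,\tau_e\bar u_e(\bar\rho_e-\rho^{(l)}_e(t))\}$; $\rho^{(l)}_e(0)$ equal to the sample data; $\sum_i\gamma^{(i)}(\bar\rho_e-\bar f_e/\bar u_e)z^{(l)}_{e,i}(t)-\mu^{(l)}_e(t)+\bar f_e\eta^{(l)}_e(t)\ge0$; $\nu^{(l)}_e(t)=\mu^{(l)}_e(t)+\frac1T\sum_i\gamma^{(i)}x_{e,i}(t)$; $\max_{e,t}|\nu^{(l)}_e(t)|\le\lambda$; $0\le\eta^{(l)}_e(t)\le\bar\eta$. *)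

From HB Require Import structures.
From mathcomp Require Import all_boot all_order all_algebra.
From mathcomp Require Import all_classical all_reals all_analysis.
Set Implicit Arguments.
Unset Strict Implicit.
Unset Printing Implicit Defensive.
Import Order.TTheory GRing.Theory Num.Theory.
Local Open Scope ring_scope.
Local Open Scope classical_set_scope.

(* Conventions:
   - edges e are 'I_n (paper's edge e+1), times t are 'I_T (paper's t),
     speed-limit indices i are 'I_m.+1 (paper's i+1; so the paper's m is our m.+1),
     samples l are 'I_N (paper's l+1).                                          *)

Section Defs.
Variable R : realType.
Variables n m T N : nat.

Record netdata := NetData {
  gam  : 'I_m.+1 -> R;
  hh   : 'I_n -> R;
  rhob : 'I_n -> R;
  fb   : 'I_n -> R;
  ub   : 'I_n -> R;
  etab : R
}.

Variable D : netdata.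

Definition tau (e : 'I_n) : R := fb D e / (ub D e * rhob D e - fb D e).
Definition rhoc (e : 'I_n) (v : R) : R :=
  tau e * rhob D e * ub D e / (tau e * ub D e + v).

(* Values of the random vector varpi = (omega, rho(0), r^in, r^o). *)
Definition Vt : Type :=
  ((T.-tuple R * n.-tuple R) * (n.-tuple (T.-tuple R) * n.-tuple (T.-tuple R)))%type.

Definition omg (v : Vt) (t : nat) : R := nth 0 (v.1.1 : seq R) t.
Definition rho0 (v : Vt) (e : 'I_n) : R := tnth v.1.2 e.
Definition rin (v : Vt) (e : 'I_n) (t : nat) : R := nth 0 (tnth v.2.1 e : seq R) t.
Definition rout (v : Vt) (e : 'I_n) (t : nat) : R := nth 0 (tnth v.2.2 e : seq R) t.

(* the preceding edge e-1 (only used for e > 0) *)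
Definition opred (e : 'I_n) : 'I_n :=
  Ordinal (leq_ltn_trans (leq_pred e) (ltn_ord e)).

Definition kap (v : Vt) (e : 'I_n) (t : nat) : R :=
  (1 - rout v (opred e) t) / (1 - rin v e t).

Definition admissible (v : Vt) : Prop :=
  (forall t : 'I_T, 0 <= omg v t) /\ (forall e, 0 <= rho0 v e) /\
  (forall e (t : 'I_T), 0 <= rin v e t < 1) /\
  (forall e (t : 'I_T), 0 <= rout v e t < 1).

Definition normV (v : Vt) : R :=
  \sum_(t < T) `|omg v t| + \sum_(e < n) `|rho0 v e|
  + \sum_(e < n) \sum_(t < T) (`|rin v e t| + `|rout v e t|).

Definition onat (f : 'I_T -> R) (t : nat) : R :=
  if insub t is Some i then f i else 0.

Fixpoint trajn (u : 'I_n -> 'I_T -> R) (v : Vt) (t : nat) : 'I_n -> R :=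
  match t with
  | 0 => fun e => rho0 v e
  | t'.+1 => let r := trajn u v t' in
     fun e => if (e : nat) == 0%N
       then r e + hh D e * (omg v t' - onat (u e) t' * r e)
       else r e + hh D e * kap v e t' * onat (u (opred e)) t' * r (opred e)
                - hh D e * onat (u e) t' * r e
  end.

Definition Xt : Type := n.-tuple (T.-tuple R).
Definition xc (xi : Xt) (e : 'I_n) (t : 'I_T) : R := tnth (tnth xi e) t.
Definition mkX (f : 'I_n -> 'I_T -> R) : Xt := [tuple [tuple f e t | t < T] | e < n].

Definition traj (u : 'I_n -> 'I_T -> R) (v : Vt) : Xt :=
  mkX (fun e t => trajn u v t e).

Definition Hcost (u : 'I_n -> 'I_T -> R) (xi : Xt) : R :=
  T%:R^-1 * \sum_(e < n) \sum_(t < T) xc xi e t * u e t.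

Definition Xi (u : 'I_n -> 'I_T -> R) : set Xt :=
  [set xi | forall e t, 0 <= xc xi e t <= rhoc e (u e t)].

Definition norm1 (xi : Xt) : R := \sum_(e < n) \sum_(t < T) `|xc xi e t|.
Definition dist1 (xi xi' : Xt) : R :=
  \sum_(e < n) \sum_(t < T) `|xc xi e t - xc xi' e t|.

Definition lawP (Pw : set Vt -> \bar R) (u : 'I_n -> 'I_T -> R) : set Xt -> \bar R :=
  pushforward Pw (traj u).

Definition empirical (xs : 'I_N -> Xt) : set Xt -> \bar R :=
  fun A => (N%:R^-1 * \sum_(l < N) \1_A (xs l))%:E.

Definition coupling (P1 P2 : set Xt -> \bar R) (pi : probability (Xt * Xt)%type R) : Prop :=
  (forall A, measurable A -> pi (A `*` setT) = P1 A) /\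
  (forall B, measurable B -> pi (setT `*` B) = P2 B).

Definition wasserstein (P1 P2 : set Xt -> \bar R) : \bar R :=
  ereal_inf [set c | exists pi : probability (Xt * Xt)%type R,
     coupling P1 P2 pi /\ c = (\int[pi]_z (dist1 z.1 z.2)%:E)%E].

Definition light_tailed_on (S : set Xt) (P : set Xt -> \bar R) : Prop :=
  P (~` S) = 0%E /\
  exists a : R, 1 < a /\ (\int[P]_xi (expR (norm1 xi `^ a))%:E < +oo)%E.

Definition in_ball_LT (eps : R) (S : set Xt) (P1 P2 : set Xt -> \bar R) : Prop :=
  (wasserstein P1 P2 <= eps%:E)%E /\ light_tailed_on S P1.

Record P4var := P4Var {
  vx   : 'I_n -> 'I_m.+1 -> 'I_T -> R;
  vy   : 'I_N -> 'I_n -> 'I_m.+1 -> 'I_T -> R;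
  vz   : 'I_N -> 'I_n -> 'I_m.+1 -> 'I_T -> R;
  vrho : 'I_N -> 'I_n -> 'I_T.+1 -> R;
  vlam : R;
  vmu  : 'I_N -> 'I_n -> 'I_T -> R;
  vnu  : 'I_N -> 'I_n -> 'I_T -> R;
  veta : 'I_N -> 'I_n -> 'I_T -> R
}.

Definition uofx (x : 'I_n -> 'I_m.+1 -> 'I_T -> R) (e : 'I_n) (t : 'I_T) : R :=
  \sum_(i < m.+1) gam D i * x e i t.

Definition tm (t : nat) : 'I_T.+1 := inord t.

Variable eps : R.

Definition feas4 (s : 'I_N -> Vt) (p : P4var) : Prop :=
  let x := vx p in let y := vy p in let z := vz p in let rho := vrho p in
  let lam := vlam p in let mu := vmu p in let nu := vnu p in let eta := veta p in
  (forall e i t, x e i t = 0 \/ x e i t = 1) /\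
  (forall e t, \sum_(i < m.+1) x e i t = 1) /\
  (forall e t, gam D ord0 <= \sum_(i < m.+1) gam D i * x e i t <= gam D ord_max) /\
  (forall l e i t, 0 <= z l e i t <= etab D * x e i t) /\
  (forall l e i t, eta l e t - etab D * (1 - x e i t) <= z l e i t <= eta l e t) /\
  (forall l e i t, 0 <= y l e i t <= rhob D e * x e i t) /\
  (forall l e i (t : 'I_T),
     rho l e (tm t) - rhob D e * (1 - x e i t) <= y l e i t <= rho l e (tm t)) /\
  (forall l (e : 'I_n) (t : 'I_T), (e : nat) = 0%N ->
     rho l e (tm t.+1) = rho l e (tm t) + hh D e * omg (s l) t
                         - hh D e * \sum_(i < m.+1) gam D i * y l e i t) /\
  (forall l (e : 'I_n) (t : 'I_T), (0 < e)%N ->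
     rho l e (tm t.+1) = rho l e (tm t)
        + hh D e * kap (s l) e t * \sum_(i < m.+1) gam D i * y l (opred e) i t
        - hh D e * \sum_(i < m.+1) gam D i * y l e i t) /\
  (forall l (e : 'I_n) (t : 'I_T), (0 < e)%N ->
     kap (s l) e t * \sum_(i < m.+1) gam D i * y l (opred e) i t
       <= Num.min (fb D e) (tau e * ub D e * (rhob D e - rho l e (tm t)))) /\
  (forall l e, rho l e (tm 0) = rho0 (s l) e) /\
  (forall l e (t : 'I_T), 0 <= \sum_(i < m.+1) gam D i * (rhob D e - fb D e / ub D e) * z l e i t
                      - mu l e t + fb D e * eta l e t) /\
  (forall l e (t : 'I_T), nu l e t = mu l e t + T%:R^-1 * \sum_(i < m.+1) gam D i * x e i t) /\
  (forall l e t, `|nu l e t| <= lam) /\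
  (forall l e t, 0 <= eta l e t <= etab D).

Definition obj_base (p : P4var) : R :=
  - vlam p * eps
  - N%:R^-1 * \sum_(e < n) \sum_(t < T) \sum_(l < N) fb D e * rhob D e * veta p l e t.

Definition obj4 (p : P4var) : R :=
  obj_base p + N%:R^-1 * \sum_(e < n) \sum_(t < T) \sum_(l < N) vnu p l e t * vrho p l e (tm t).

Definition feas4' (s : 'I_N -> Vt) (p : P4var) (th : 'I_N -> 'I_n -> 'I_T -> R) : Prop :=
  feas4 s p /\ (forall l e (t : 'I_T), th l e t ^+ 2 <= vnu p l e t * vrho p l e (tm t)).

Definition obj4' (p : P4var) (th : 'I_N -> 'I_n -> 'I_T -> R) : R :=
  obj_base p + N%:R^-1 * \sum_(e < n) \sum_(t < T) \sum_(l < N) th l e t ^+ 2.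

Definition optval4 (s : 'I_N -> Vt) : \bar R :=
  ereal_sup [set (obj4 p)%:E | p in feas4 s].
Definition optval4' (s : 'I_N -> Vt) : \bar R :=
  ereal_sup [set (obj4' pt.1 pt.2)%:E | pt in [set pt | feas4' s pt.1 pt.2]].

Definition optimizer4 (s : 'I_N -> Vt) (p : P4var) : Prop :=
  feas4 s p /\ forall q, feas4 s q -> obj4 q <= obj4 p.
Definition optimizer4' (s : 'I_N -> Vt) (p : P4var) th : Prop :=
  feas4' s p th /\ forall q th', feas4' s q th' -> obj4' q th' <= obj4' p th.

End Defs.

From HB Require Import structures.
From mathcomp Require Import all_boot all_order all_algebra.
From mathcomp Require Import all_classical all_reals all_analysis.
From mathcomp Require Import measurable_realfun ring lra.
Import Order.TTheory GRing.Theory Num.Theory.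
Local Open Scope ring_scope.
Local Open Scope classical_set_scope.
Set Implicit Arguments.
Unset Strict Implicit.

(* Equivalence. (P4') only replaces nu rho by theta^2 <= nu rho, so its value at a point
   never exceeds the (P4) value. Conversely, at a feasible point of (P4) every negative nu
   can be raised to 0 by setting mu = -u/T: the mu-constraint then holds because all its
   other terms are nonnegative, and the objective does not decrease because rho >= 0. At
   the clipped point theta = sqrt(nu rho) is feasible for (P4') with the same value. At an
   optimizer clipping cannot strictly increase the objective, so nu rho >= 0 holds there.

   The big-M constraints force y = rho x and z = eta x with x one-hot, so
   rho^(l) is the sample trajectory under u = sum_i gamma^(i) x_i. Coordinatewise, the
   bound |nu| <= lambda and the mu-constraint give a_l <= H(u; xi) + lambda |xi - rho^(l)|_1
   on the support of P(u), with a_l the l-th sample term of the objective. Integrating the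
   c-transform phi(y) = max_l (a_l - lambda d(y, rho^(l))) against a near-optimal coupling
   of P(u) with the empirical law turns this into E_P(u)[H] >= mean_l a_l - lambda eps(beta)
   = obj(P4) >= obj(P4') whenever P(u) lies in the ball, an event of probability at least
   1 - beta. *)

Lemma bigM_product (R : realDomainType) (x w v M : R) : x = 0 \/ x = 1 ->
  0 <= w <= M * x -> v - M * (1 - x) <= w <= v -> w = v * x.
Proof.
move=> [->|->]; rewrite ?mulr0 ?mulr1 ?subrr ?mulr0 ?subr0 => /andP[w0 wM] /andP[vw wv].
  by apply/eqP; rewrite eq_le wM w0.
by apply/eqP; rewrite eq_le wv vw.
Qed.

Lemma binary_sum1_onehot (R : numDomainType) (I : finType) (x : I -> R) :
  (forall i, x i = 0 \/ x i = 1) -> \sum_i x i = 1 ->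
  exists i, forall j, x j = (j == i)%:R.
Proof.
move=> x01 sum1.
have [i xi1] : exists i, x i = 1.
  apply: contrapT => /forallNP xn1; move: sum1; rewrite big1 => [/eqP|i _].
    by rewrite eq_sym oner_eq0.
  by case: (x01 i) => // /xn1.
exists i => j; have [->|ji] := eqVneq j i; first by rewrite xi1.
have rest0 : \sum_(k | k != i) x k = 0.
  by move: sum1; rewrite (bigD1 i) //= xi1 => /(canRL (addKr 1)); rewrite addNr.
apply: (psumr_eq0P _ rest0) => // k _; by case: (x01 k) => ->.
Qed.

Lemma ler_sum_eq (R : numDomainType) (I : finType) (F G : I -> R) :
  (forall i, F i <= G i) -> \sum_i F i = \sum_i G i -> forall i, F i = G i.
Proof.
move=> FG sumFG i; have GF0 : \sum_i (G i - F i) = 0 by rewrite sumrB sumFG subrr.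
have /(_ i isT)/eqP := psumr_eq0P (fun j _ => etrans (subr_ge0 _ _) (FG j)) GF0.
by rewrite subr_eq0 => /eqP.
Qed.

Lemma onat_ord (R : realType) (T : nat) (f : 'I_T -> R) (t : 'I_T) : onat f t = f t.
Proof. by rewrite /onat valK. Qed.

Section feasible_point.
Variables (R : realType) (n m T N : nat) (D : netdata R n m) (s : 'I_N -> Vt R n T).
Variable p : P4var R n m T N.
Hypothesis hp : feas4 D s p.

Local Notation u := (uofx D (vx p)).

Lemma feas4_y l e i (t : 'I_T) : vy p l e i t = vrho p l e (tm T t) * vx p e i t.
Proof.
have [x01 [_ [_ [_ [_ [y_box [y_bigM _]]]]]]] := hp.
exact: bigM_product (x01 e i t) (y_box l e i t) (y_bigM l e i t).
Qed.

Lemma feas4_z l e i t : vz p l e i t = veta p l e t * vx p e i t.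
Proof.
have [x01 [_ [_ [z_box [z_bigM _]]]]] := hp.
exact: bigM_product (x01 e i t) (z_box l e i t) (z_bigM l e i t).
Qed.

Lemma feas4_onehot e t : exists i, forall j, vx p e j t = (j == i)%:R.
Proof. by have [x01 [sum1 _]] := hp; apply: binary_sum1_onehot. Qed.

Lemma feas4_speed e t : exists i, u e t = gam D i.
Proof.
have [i xi] := feas4_onehot e t; exists i.
rewrite /uofx (bigD1 i) //= xi eqxx mulr1 big1 ?addr0 // => j /negbTE ji.
by rewrite xi ji mulr0.
Qed.

Lemma feas4_speed_gt0 : 0 < gam D ord0 -> forall e t, 0 < u e t.
Proof.
move=> gam0 e t; have [_ [_ [u_box _]]] := hp.
by have /andP[+ _] := u_box e t; apply: lt_le_trans.
Qed.

Lemma feas4_rho_ge0 l e (t : 'I_T) : 0 <= vrho p l e (tm T t).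
Proof.
have [i xi] := feas4_onehot e t; have [_ [_ [_ [_ [_ [y_box _]]]]]] := hp.
by have := y_box l e i t; rewrite feas4_y xi eqxx mulr1 => /andP[].
Qed.

Lemma sum_gam_y l e (t : 'I_T) :
  \sum_i gam D i * vy p l e i t = vrho p l e (tm T t) * u e t.
Proof. by rewrite /uofx mulr_sumr; apply: eq_bigr => i _; rewrite feas4_y mulrCA. Qed.

Lemma sum_gam_z l e (t : 'I_T) :
  \sum_i gam D i * (rhob D e - fb D e / ub D e) * vz p l e i t
  = (rhob D e - fb D e / ub D e) * veta p l e t * u e t.
Proof. by rewrite /uofx mulr_sumr; apply: eq_bigr => i _; rewrite feas4_z; ring. Qed.

Lemma feas4_traj l e (t : 'I_T) : vrho p l e (tm T t) = xc (traj D u (s l)) e t.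
Proof.
have [_ [_ [_ [_ [_ [_ [_ [flow0 [flow [_ [init _]]]]]]]]]]] := hp.
rewrite /xc /traj /mkX !tnth_mktuple; case: t => k /=.
elim: k e => [|k IH] e kT /=; first exact: init.
have kT' : (k < T)%N := ltnW kT.
have onatk (f : 'I_T -> R) : onat f k = f (Ordinal kT') := onat_ord f (Ordinal kT').
rewrite !onatk -!(IH _ kT').
have [e0|e_gt0] := eqVneq (e : nat) 0%N.
  by rewrite (flow0 l e (Ordinal kT') e0) sum_gam_y; ring.
rewrite -lt0n in e_gt0.
by rewrite (flow l e (Ordinal kT') e_gt0) !sum_gam_y; ring.
Qed.

End feasible_point.

Section P4_equivalence.
Variables (R : realType) (n m T N : nat) (D : netdata R n m) (s : 'I_N -> Vt R n T).
Variable eps : R.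
Hypotheses (gam0 : 0 < gam D ord0) (fb_gt0 : forall e, 0 < fb D e)
  (ub_gt0 : forall e, 0 < ub D e) (fb_cap : forall e, fb D e < ub D e * rhob D e).

Implicit Types p : P4var R n m T N.

Definition clip_nu p : P4var R n m T N :=
  P4Var (vx p) (vy p) (vz p) (vrho p) (vlam p)
   (fun l e t => if vnu p l e t < 0 then - (T%:R^-1 * uofx D (vx p) e t)
                 else vmu p l e t)
   (fun l e t => if vnu p l e t < 0 then 0 else vnu p l e t) (veta p).

Lemma feas4_clip_nu p : feas4 D s p -> feas4 D s (clip_nu p).
Proof.
move=> hp; have z_sum := sum_gam_z hp; have u_gt0 := feas4_speed_gt0 hp gam0.
have cong_gt0 e : 0 < rhob D e - fb D e / ub D e.
  by rewrite subr_gt0 ltr_pdivrMr // mulrC.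
case: hp => [h1 [h2 [h3 [h4 [h5 [h6 [h7 [h8 [h9 [h10 [h11
  [mu_le [nu_def [nu_lam eta_box]]]]]]]]]]]]]].
do 11 (split; first by []).
split.
  move=> l e t /=; case: ifP => _; last exact: mu_le.
  have /andP[eta0 _] := eta_box l e t.
  rewrite z_sum opprK -addrA; apply: addr_ge0.
    exact: mulr_ge0 (mulr_ge0 (ltW (cong_gt0 e)) eta0) (ltW (u_gt0 e t)).
  apply: addr_ge0; last exact: mulr_ge0 (ltW (fb_gt0 e)) eta0.
  by apply: mulr_ge0; [rewrite invr_ge0 | apply: ltW].
split=> [l e t /=|]; first by case: ifP => _; rewrite ?addNr ?nu_def.
split=> // l e t /=; case: ifP => _ //; rewrite normr0.
exact: le_trans (normr_ge0 _) (nu_lam l e t).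
Qed.

Lemma nu_rho_le_clip p : feas4 D s p -> forall l e (t : 'I_T),
  vnu p l e t * vrho p l e (tm T t) <= vnu (clip_nu p) l e t * vrho p l e (tm T t).
Proof.
move=> hp l e t /=; case: ifPn => // nu_lt0; rewrite mul0r.
exact: mulr_le0_ge0 (ltW nu_lt0) (feas4_rho_ge0 hp l e t).
Qed.

Lemma clip_nu_rho_ge0 p : feas4 D s p -> forall l e (t : 'I_T),
  0 <= vnu (clip_nu p) l e t * vrho p l e (tm T t).
Proof.
move=> hp l e t /=; case: ifPn => [_|]; first by rewrite mul0r.
by rewrite -leNgt => nu0; apply: mulr_ge0 nu0 (feas4_rho_ge0 hp l e t).
Qed.

Lemma obj4_le_clip p : feas4 D s p -> obj4 D eps p <= obj4 D eps (clip_nu p).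
Proof.
move=> hp; rewrite /obj4 lerD2l ler_wpM2l ?invr_ge0 //.
by do 3!(apply: ler_sum => ? _); apply: nu_rho_le_clip.
Qed.

Definition sqrt_theta p l e (t : 'I_T) := Num.sqrt (vnu p l e t * vrho p l e (tm T t)).

Section nonnegative_nu_rho.
Variable p : P4var R n m T N.
Hypothesis nu_rho_ge0 : forall l e (t : 'I_T), 0 <= vnu p l e t * vrho p l e (tm T t).

Lemma feas4'_sqrt_theta : feas4 D s p -> feas4' D s p (sqrt_theta p).
Proof. by split=> // l e t; rewrite sqr_sqrtr. Qed.

Lemma obj4'_sqrt_theta : obj4' D eps p (sqrt_theta p) = obj4 D eps p.
Proof.
rewrite /obj4' /obj4; congr (_ + _ * _).
by do 3!(apply: eq_bigr => ? _); rewrite sqr_sqrtr.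
Qed.

End nonnegative_nu_rho.

Lemma obj4'_le_obj4 p th : feas4' D s p th -> obj4' D eps p th <= obj4 D eps p.
Proof.
move=> [_ th_le]; rewrite /obj4' /obj4 lerD2l ler_wpM2l ?invr_ge0 //.
by do 3!(apply: ler_sum => ? _); apply: th_le.
Qed.

Lemma feas4_lift p : feas4 D s p ->
  feas4' D s (clip_nu p) (sqrt_theta (clip_nu p)) /\
  obj4 D eps p <= obj4' D eps (clip_nu p) (sqrt_theta (clip_nu p)).
Proof.
move=> hp; have nu_rho_ge0 := clip_nu_rho_ge0 hp.
split; first exact/feas4'_sqrt_theta/feas4_clip_nu.
by rewrite obj4'_sqrt_theta //; apply: obj4_le_clip.
Qed.

Lemma optval4_eq : optval4 D eps s = optval4' D eps s.
Proof.
apply/eqP; rewrite eq_le; apply/andP; split.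
  apply: ge_ereal_sup => _ [p hp <-]; have [hp' obj_le] := feas4_lift hp.
  apply: le_trans (_ : _ <= (obj4' D eps (clip_nu p) (sqrt_theta (clip_nu p)))%:E)%E _.
    by rewrite lee_fin.
  by apply: ereal_sup_ubound; exists (clip_nu p, sqrt_theta (clip_nu p)).
apply: ge_ereal_sup => _ [[p th] hp' <-] /=.
apply: le_trans (_ : _ <= (obj4 D eps p)%:E)%E _.
  by rewrite lee_fin; exact: obj4'_le_obj4 hp'.
by apply: ereal_sup_ubound; exists p => //; case: hp'.
Qed.

(* Optimality forces equality in [obj4_le_clip], hence termwise equality. *)
Lemma optimizer4_nu_rho_ge0 p : (0 < N)%N -> optimizer4 D eps s p ->
  forall l e (t : 'I_T), 0 <= vnu p l e t * vrho p l e (tm T t).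
Proof.
move=> N_gt0 [hp p_opt] l e t.
pose F p' e t l := vnu p' l e t * vrho p l e (tm T t).
have Fle e' t' l' : F p e' t' l' <= F (clip_nu p) e' t' l' by apply: nu_rho_le_clip.
have sum_eq :
    \sum_e' \sum_t' \sum_l' F p e' t' l' = \sum_e' \sum_t' \sum_l' F (clip_nu p) e' t' l'.
  have : obj4 D eps (clip_nu p) = obj4 D eps p.
    by apply/eqP; rewrite eq_le p_opt ?obj4_le_clip //; apply: feas4_clip_nu.
  rewrite /obj4 => /addrI/mulfI; rewrite invr_eq0 pnatr_eq0 -lt0n N_gt0.
  by move=> /(_ isT) ->.
have Fle_t e' t' : \sum_l' F p e' t' l' <= \sum_l' F (clip_nu p) e' t' l'.
  by apply: ler_sum => l' _; apply: Fle.
have Fle_e e' : \sum_t' \sum_l' F p e' t' l' <= \sum_t' \sum_l' F (clip_nu p) e' t' l'.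
  by apply: ler_sum => t' _; apply: Fle_t.
have sum_eq_t := ler_sum_eq (Fle_t e) (ler_sum_eq Fle_e sum_eq e) t.
rewrite [X in _ <= X](ler_sum_eq (Fle e t) sum_eq_t l).
exact: clip_nu_rho_ge0.
Qed.

Lemma optimizer4P p : (0 < N)%N ->
  optimizer4 D eps s p <-> exists th, optimizer4' D eps s p th.
Proof.
move=> N_gt0; split=> [p_opt|[th [hp' p_opt']]].
  have [hp _] := p_opt; have nu_rho_ge0 := optimizer4_nu_rho_ge0 N_gt0 p_opt.
  exists (sqrt_theta p); split; first exact: feas4'_sqrt_theta.
  move=> q th' hq'; rewrite obj4'_sqrt_theta //.
  by apply: le_trans (obj4'_le_obj4 hq') _; apply: p_opt.2; case: hq'.
split=> [|q hq]; first by case: hp'.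
have [hq' obj_le] := feas4_lift hq.
exact: le_trans obj_le (le_trans (p_opt' _ _ hq') (obj4'_le_obj4 hp')).
Qed.

End P4_equivalence.

(* [nu r - nu xi <= lam |xi - r|], and [mu xi <= max(mu, 0) c <= eta K c = F eta]. *)
Lemma dual_coordinate_bound (R : realFieldType) (u Ti lam nu mu eta r xi c K F : R) :
  nu = mu + Ti * u -> `|nu| <= lam -> 0 <= eta -> mu <= eta * K ->
  K * c = F -> 0 <= F -> 0 <= xi <= c ->
  nu * r - F * eta <= Ti * (xi * u) + lam * `|xi - r|.
Proof.
move=> nu_def nu_lam eta0 mu_le KcF F0 /andP[xi0 xi_c].
have nu_shift : nu * r - nu * xi <= lam * `|xi - r|.
  rewrite -mulrBr; apply: le_trans (ler_norm _) _.
  by rewrite normrM distrC ler_wpM2r.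
have mu_xi : mu * xi <= F * eta.
  have [mu0|mu_gt0] := lerP mu 0.
    exact: le_trans (mulr_le0_ge0 mu0 xi0) (mulr_ge0 F0 eta0).
  have := ler_wpM2r (le_trans xi0 xi_c) mu_le; rewrite -mulrA KcF [eta * _]mulrC.
  exact: le_trans (ler_wpM2l (ltW mu_gt0) xi_c).
have -> : nu * r = (nu * r - nu * xi) + mu * xi + Ti * (xi * u) by rewrite nu_def; ring.
lra.
Qed.

Lemma rhoc_flow (R : realType) (n m : nat) (D : netdata R n m) e (v : R) :
  0 < fb D e -> 0 < ub D e -> fb D e < ub D e * rhob D e -> 0 <= v ->
  (v * (rhob D e - fb D e / ub D e) + fb D e) * rhoc D e v = fb D e * rhob D e.
Proof.
move=> fb_gt0 ub_gt0 fb_cap v0; rewrite /rhoc /tau.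
have cap_gt0 : 0 < ub D e * rhob D e - fb D e by rewrite subr_gt0.
have flow_gt0 : 0 < fb D e * ub D e + v * (ub D e * rhob D e - fb D e).
  have := mulr_gt0 fb_gt0 ub_gt0; have := mulr_ge0 v0 (ltW cap_gt0); lra.
by field; rewrite !gt_eqF.
Qed.

Definition sample_term (R : realType) (n m T N : nat) (D : netdata R n m)
    (p : P4var R n m T N) (l : 'I_N) : R :=
  \sum_(e < n) \sum_(t < T)
     (vnu p l e t * vrho p l e (tm T t) - fb D e * rhob D e * veta p l e t).

Lemma obj4_sample_mean (R : realType) (n m T N : nat) (D : netdata R n m) eps
    (p : P4var R n m T N) :
  obj4 D eps p = N%:R^-1 * \sum_(l < N) sample_term D p l - vlam p * eps.
Proof.
suff -> : \sum_(l < N) sample_term D p l =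
    \sum_(e < n) \sum_(t < T) \sum_(l < N) vnu p l e t * vrho p l e (tm T t)
    - \sum_(e < n) \sum_(t < T) \sum_(l < N) fb D e * rhob D e * veta p l e t.
  by rewrite /obj4 /obj_base; ring.
rewrite exchange_big -sumrB; apply: eq_bigr => e _.
by rewrite exchange_big -sumrB; apply: eq_bigr => t _; rewrite -sumrB.
Qed.

Section sample_term_bound.
Variables (R : realType) (n m T N : nat) (D : netdata R n m) (s : 'I_N -> Vt R n T).
Hypotheses (gam0 : 0 < gam D ord0) (rhob_gt0 : forall e, 0 < rhob D e)
  (fb_gt0 : forall e, 0 < fb D e) (ub_gt0 : forall e, 0 < ub D e)
  (fb_cap : forall e, fb D e < ub D e * rhob D e).
Variable p : P4var R n m T N.
Hypothesis hp : feas4 D s p.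

Local Notation u := (uofx D (vx p)).

Lemma feas4_sample_term_le xi l : Xi D u xi ->
  sample_term D p l <= Hcost u xi + vlam p * dist1 xi (traj D u (s l)).
Proof.
move=> xi_supp; have z_sum := sum_gam_z hp; have u_gt0 := feas4_speed_gt0 hp gam0.
have [_ [_ [_ [_ [_ [_ [_ [_ [_ [_ [_ [mu_le [nu_def [nu_lam eta_box]]]]]]]]]]]]]] := hp.
rewrite /Hcost /dist1 !mulr_sumr -big_split; apply: ler_sum => e _.
rewrite !mulr_sumr -big_split; apply: ler_sum => t _; rewrite -feas4_traj //.
have /andP[eta0 _] := eta_box l e t.
pose K := u e t * (rhob D e - fb D e / ub D e) + fb D e.
apply: (@dual_coordinate_bound _ (u e t) _ _ _ (vmu p l e t) _ _ _ (rhoc D e (u e t)) K).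
- exact: nu_def.
- exact: nu_lam.
- exact: eta0.
- by have := mu_le l e t; rewrite z_sum /K; lra.
- by apply: rhoc_flow; rewrite ?ltW.
- exact/mulr_ge0/ltW/rhob_gt0/ltW.
- exact: xi_supp.
Qed.

End sample_term_bound.


(* [lawP] is a bare set function (the trajectory map is never shown measurable), so it is
   compared with genuine measures only through its values on measurable sets. *)
Section setfun_integral.
Import HBNNSimple.

Lemma eq_setfun_integral d (T : measurableType d) (R : realType)
    (m1 m2 : set T -> \bar R) (D : set T) (f : T -> \bar R) :
  (forall A, measurable A -> m1 A = m2 A) ->
  (\int[m1]_(x in D) f x = \int[m2]_(x in D) f x)%E.
Proof.
move=> m12; rewrite /integral; congr (ereal_sup _ - ereal_sup _)%E;
  apply: eq_imagel => h _; apply: eq_fsbigr => r _;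
  by rewrite m12 //; exact: measurable_funPTI.
Qed.

End setfun_integral.

(* An alias carrying the [mfun] instance that [distribution] requires. *)
Definition fst_mfun d (X : measurableType d) : X * X -> X := fst.
HB.instance Definition _ d (X : measurableType d) :=
  isMeasurableFun.Build _ _ _ _ (@fst_mfun d X) measurable_fst.

Section wasserstein_duality.
Context d (X : measurableType d) (R : realType).
Variable dist : X -> X -> R.
Hypotheses (mdist : measurable_fun setT (fun z : X * X => dist z.1 z.2))
  (mdistl : forall y, measurable_fun setT (dist^~ y))
  (dist_ge0 : forall x y, 0 <= dist x y) (distxx : forall x, dist x x = 0)
  (dist_triangle : forall x y z, dist x z <= dist x y + dist y z).
Variables (N : nat) (xs : 'I_N -> X) (a : 'I_N -> R) (lam : R) (H : X -> R) (S : set X).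
Hypotheses (lam_ge0 : 0 <= lam) (mH : measurable_fun setT H) (mS : measurable S)
  (H_ge0 : forall x, S x -> 0 <= H x)
  (a_le : forall x l, S x -> a l <= H x + lam * dist x (xs l)).

(* Floored at 0 so that it integrates as a nonnegative function; the floor is harmless
   because [H] is nonnegative on [S]. *)
Definition ctransform (y : X) : R :=
  \big[Num.max/0]_(l < N) (a l - lam * dist y (xs l)).

Lemma ctransform_ge0 y : 0 <= ctransform y.
Proof. by rewrite /ctransform; elim/big_rec: _ => // l r _ r0; rewrite le_max r0 orbT. Qed.

Lemma ctransform_ge l : a l <= ctransform (xs l).
Proof. by rewrite /ctransform (bigD1 l) //= distxx mulr0 subr0 le_max lexx. Qed.

Lemma ctransform_le x y : S x -> ctransform y <= H x + lam * dist x y.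
Proof.
move=> Sx; rewrite /ctransform; elim/big_rec: _ => [|l r _ r_le].
  exact: addr_ge0 (H_ge0 Sx) (mulr_ge0 lam_ge0 (dist_ge0 x y)).
rewrite ge_max r_le andbT lerBlDr -addrA -mulrDr.
apply: le_trans (a_le l Sx) _; rewrite lerD2l.
exact: ler_wpM2l.
Qed.

Lemma measurable_ctransform : measurable_fun setT ctransform.
Proof.
rewrite /ctransform; elim: (index_enum _) => [|l r mr].
  by under eq_fun do rewrite big_nil; exact: measurable_cst.
under eq_fun do rewrite big_cons; apply: measurable_maxr mr.
by apply: measurable_funB; [exact: measurable_cst | apply: measurable_funM].
Qed.

Section coupling.
Variables (P1 : set X -> \bar R) (pi : probability (X * X)%type R).
Hypotheses (pi_fst : forall A, measurable A -> pi (A `*` setT) = P1 A)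
  (pi_snd : forall B, measurable B ->
     pi (setT `*` B) = (N%:R^-1 * \sum_(l < N) \1_B (xs l))%:E)
  (P1_S : P1 (~` S) = 0%E).

Let mu := distribution pi (@fst_mfun d X).

Lemma integral_coupling_fst :
  (\int[P1]_x (H x)%:E = \int[pi]_z (Num.max (H z.1) 0)%:E)%E.
Proof.
have mu_P1 A : measurable A -> mu A = P1 A.
  move=> mA; rewrite -pi_fst //; congr (pi _).
  by apply/seteqP; split=> [[x y] /= Ax|[x y] [] //].
have mHp : measurable_fun setT (fun x => Num.max (H x) 0).
  exact: measurable_maxr mH (measurable_cst _).
rewrite (eq_setfun_integral _ (m2 := mu)) => [|A mA]; last by rewrite mu_P1.
rewrite (@ae_eq_integral _ _ _ mu _ (fun x => (Num.max (H x) 0)%:E)) //.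
- rewrite /mu /distribution ge0_integral_pushforward //; first exact/measurable_EFinP.
  by move=> x _; rewrite lee_fin le_max lexx orbT.
- exact/measurable_EFinP.
- exact/measurable_EFinP.
exists (~` S); split; first exact: measurableC.
  exact: etrans (mu_P1 _ (measurableC mS)) P1_S.
by move=> x /= neq Sx; apply: neq => _; rewrite max_l // H_ge0.
Qed.

Lemma integral_coupling_snd (g : X -> R) :
  measurable_fun setT g -> (forall x, 0 <= g x) ->
  (\int[pi]_z (g z.2)%:E = (N%:R^-1 * \sum_(l < N) g (xs l))%:E)%E.
Proof.
move=> mg g_ge0; have mEg : measurable_fun setT (EFin \o g) by exact/measurable_EFinP.
have Eg_ge0 x : setT x -> (0 <= (g x)%:E)%E by rewrite lee_fin.
pose xs' k := if insub k is Some l then xs l else point.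
have xs'E (l : 'I_N) : xs' l = xs l by rewrite /xs' valK.
have N_ge0 : (0 <= N%:R^-1 :> R) by rewrite invr_ge0.
pose emp := mscale (NngNum N_ge0) (msum (fun k => \d_(xs' k)) N).
transitivity (\int[pushforward pi snd]_x (g x)%:E)%E.
  by rewrite ge0_integral_pushforward // => y _; rewrite lee_fin.
transitivity (\int[emp]_x (g x)%:E)%E.
  apply: eq_setfun_integral => B mB; rewrite /pushforward.
  rewrite (_ : snd @^-1` B = setT `*` B); last by apply/seteqP; split=> [[]|[] ? ? []].
  rewrite pi_snd // /emp /mscale /msum /= EFinM -sumEFin; congr (_ * _)%E.
  by apply: eq_bigr => k _; rewrite /dirac xs'E.
rewrite ge0_integral_mscale // ge0_integral_measure_sum // EFinM -sumEFin /=.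
by congr (_ * _)%E; apply: eq_bigr => k _; rewrite integral_dirac // diracT mul1e xs'E.
Qed.

Lemma coupling_bound :
  ((N%:R^-1 * \sum_(l < N) a l)%:E <=
    \int[P1]_x (H x)%:E + lam%:E * \int[pi]_z (dist z.1 z.2)%:E)%E.
Proof.
have mHp : measurable_fun setT (fun z : X * X => Num.max (H z.1) 0).
  exact: measurableT_comp (measurable_maxr mH (measurable_cst _)) measurable_fst.
have mEdist : measurable_fun setT (fun z : X * X => (dist z.1 z.2)%:E).
  exact/measurable_EFinP.
have Hp_ge0 (z : X * X) : (0 <= (Num.max (H z.1) 0)%:E)%E.
  by rewrite lee_fin le_max lexx orbT.
have ldist_ge0 (z : X * X) : (0 <= lam%:E * (dist z.1 z.2)%:E)%E.
  by rewrite -EFinM lee_fin mulr_ge0.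
rewrite integral_coupling_fst -ge0_integralZl //; last by move=> z _; rewrite lee_fin.
rewrite -ge0_integralD //; last 2 first.
- exact/measurable_EFinP.
- exact: emeasurable_funM (measurable_cst _) mEdist.
apply: le_trans (_ : _ <= \int[pi]_z (ctransform z.2)%:E)%E _.
  rewrite integral_coupling_snd ?lee_fin; last 2 first.
  - exact: measurable_ctransform.
  - exact: ctransform_ge0.
  by apply: ler_wpM2l; rewrite ?invr_ge0 // ler_sum // => l _; apply: ctransform_ge.
apply: ae_ge0_le_integral => //.
- by move=> z _; rewrite lee_fin ctransform_ge0.
- by apply/measurable_EFinP; exact: measurableT_comp measurable_ctransform measurable_snd.
- by move=> z _; exact: adde_ge0.
- by apply: emeasurable_funD; [exact/measurable_EFinP | exact: emeasurable_funM].
exists (~` S `*` setT); split.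
- by apply: measurableX => //; exact: measurableC.
- exact: etrans (pi_fst (measurableC mS)) P1_S.
move=> [x y] /= not_le; split=> // Sx; apply: not_le => _.
rewrite -EFinM -EFinD lee_fin (le_trans (ctransform_le _ Sx)) // lerD2r.
by rewrite le_max lexx.
Qed.

End coupling.

Lemma wasserstein_dual_bound (eps : R) (P1 : set X -> \bar R) : P1 (~` S) = 0%E ->
  (forall del, 0 < del -> exists pi : probability (X * X)%type R,
     ((forall A, measurable A -> pi (A `*` setT) = P1 A) /\
      (forall B, measurable B ->
         pi (setT `*` B) = (N%:R^-1 * \sum_(l < N) \1_B (xs l))%:E)) /\
     (\int[pi]_z (dist z.1 z.2)%:E < (eps + del)%:E)%E) ->
  ((N%:R^-1 * \sum_(l < N) a l - lam * eps)%:E <= \int[P1]_x (H x)%:E)%E.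
Proof.
move=> P1_S near_opt; apply/lee_subgt0Pr => del del_gt0.
have lam1_gt0 : 0 < lam + 1 by rewrite ltr_wpDl.
have lam_del : lam * (del / (lam + 1)) <= del.
  by rewrite mulrA ler_pdivrMr // mulrDr mulr1 mulrC lerDl ltW.
have [pi [[pi_fst pi_snd] cost_lt]] := near_opt _ (divr_gt0 del_gt0 lam1_gt0).
have I_ge0 : (0 <= \int[P1]_x (H x)%:E)%E.
  rewrite (integral_coupling_fst pi_fst P1_S); apply: integral_ge0 => z _.
  by rewrite lee_fin le_max lexx orbT.
have C_ge0 : (0 <= \int[pi]_z (dist z.1 z.2)%:E)%E.
  by apply: integral_ge0 => z _; rewrite lee_fin.
move: (coupling_bound pi_fst pi_snd P1_S) I_ge0 C_ge0 cost_lt.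
case: (\int[P1]_x (H x)%:E)%E => [I||] //; last by move=> *; rewrite leey.
case: (\int[pi]_z (dist z.1 z.2)%:E)%E => [C||] //.
rewrite -EFinM -EFinD -EFinB !lee_fin lte_fin => mean_le _ _ C_lt.
have := ler_wpM2l lam_ge0 (ltW C_lt); lra.
Qed.

End wasserstein_duality.

Section trajectory_space.
Variables (R : realType) (n T : nat).

Lemma measurable_xc e t : measurable_fun setT (fun xi : Xt R n T => xc xi e t).
Proof. exact: measurableT_comp (measurable_tnth t) (measurable_tnth e). Qed.

Lemma measurable_dist1 :
  measurable_fun setT (fun z : (Xt R n T * Xt R n T)%type => dist1 z.1 z.2).
Proof.
rewrite /dist1; apply: measurable_sum => e; apply: measurable_sum => t.
apply: measurableT_comp; first exact: normr_measurable.
apply: measurable_funB.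
  exact: measurableT_comp (measurable_xc e t) measurable_fst.
exact: measurableT_comp (measurable_xc e t) measurable_snd.
Qed.

Lemma measurable_dist1l (y : Xt R n T) :
  measurable_fun setT (fun x : Xt R n T => dist1 x y).
Proof.
rewrite /dist1; apply: measurable_sum => e; apply: measurable_sum => t.
apply: measurableT_comp; first exact: normr_measurable.
exact: measurable_funB (measurable_xc e t) (measurable_cst _).
Qed.

Lemma measurable_Hcost (u : 'I_n -> 'I_T -> R) : measurable_fun setT (Hcost u).
Proof.
rewrite /Hcost; apply: measurable_funM; first exact: measurable_cst.
apply: measurable_sum => e; apply: measurable_sum => t.
exact: measurable_funM (measurable_xc e t) (measurable_cst _).
Qed.

Lemma measurable_Xi (m : nat) (D : netdata R n m) (u : 'I_n -> 'I_T -> R) :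
  measurable (Xi D u).
Proof.
have -> : Xi D u = \bigcap_(e in setT) \bigcap_(t in setT)
    ((fun xi => xc xi e t) @^-1` `[0, rhoc D e (u e t)]).
  apply/seteqP; split=> xi /= xi_box.
    by move=> e _ t _ /=; rewrite in_itv /= xi_box.
  by move=> e t; have := xi_box e I t I; rewrite /= in_itv.
apply: fin_bigcap_measurable; first exact: finite_finset.
move=> e _; apply: fin_bigcap_measurable; first exact: finite_finset.
by move=> t _; rewrite -[X in measurable X]setTI; apply: measurable_xc.
Qed.

Lemma dist1_ge0 (x y : Xt R n T) : 0 <= dist1 x y.
Proof. by apply: sumr_ge0 => e _; apply: sumr_ge0. Qed.

Lemma dist1xx (x : Xt R n T) : dist1 x x = 0.
Proof. by apply: big1 => e _; apply: big1 => t _; rewrite subrr normr0. Qed.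

Lemma dist1_triangle (x y z : Xt R n T) : dist1 x z <= dist1 x y + dist1 y z.
Proof.
rewrite /dist1 -big_split; apply: ler_sum => e _; rewrite -big_split.
by apply: ler_sum => t _; apply: ler_distD.
Qed.

Lemma wasserstein_near_coupling (P1 P2 : set (Xt R n T) -> \bar R) (eps : R) :
  (wasserstein P1 P2 <= eps%:E)%E -> forall del, 0 < del ->
  exists pi, coupling P1 P2 pi /\ (\int[pi]_z (dist1 z.1 z.2)%:E < (eps + del)%:E)%E.
Proof.
move=> W_le del del_gt0.
have /ereal_inf_lt[_ [pi [pi_cpl ->]] cost_lt] : (wasserstein P1 P2 < (eps + del)%:E)%E.
  by apply: le_lt_trans W_le _; rewrite lte_fin ltrDl.
by exists pi.
Qed.

End trajectory_space.

Section finite_sample_guarantee.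
Variables (R : realType) (n m T N : nat) (D : netdata R n m) (s : 'I_N -> Vt R n T).
Hypotheses (n_gt0 : (0 < n)%N) (T_gt0 : (0 < T)%N) (N_gt0 : (0 < N)%N).
Hypotheses (gam0 : 0 < gam D ord0) (rhob_gt0 : forall e, 0 < rhob D e)
  (fb_gt0 : forall e, 0 < fb D e) (ub_gt0 : forall e, 0 < ub D e)
  (fb_cap : forall e, fb D e < ub D e * rhob D e).
Variables (Pw : set (Vt R n T) -> \bar R) (eps : R) (p : P4var R n m T N).
Hypothesis hp : feas4 D s p.

Local Notation u := (uofx D (vx p)).

Lemma Hcost_ge0 xi : Xi D u xi -> 0 <= Hcost u xi.
Proof.
move=> xi_box; apply: mulr_ge0; first by rewrite invr_ge0.
apply: sumr_ge0 => e _; apply: sumr_ge0 => t _.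
by apply: mulr_ge0; [case/andP: (xi_box e t) | exact: ltW (feas4_speed_gt0 hp gam0 e t)].
Qed.

Lemma feas4_obj4_le_expected_cost :
  in_ball_LT eps (Xi D u) (lawP D Pw u) (empirical (fun l => traj D u (s l))) ->
  ((obj4 D eps p)%:E <= \int[lawP D Pw u]_xi (Hcost u xi)%:E)%E.
Proof.
move=> [W_le [P1_S _]].
have lam_ge0 : 0 <= vlam p.
  have [_ [_ [_ [_ [_ [_ [_ [_ [_ [_ [_ [_ [_ [nu_lam _]]]]]]]]]]]]]] := hp.
  exact: le_trans (normr_ge0 _) (nu_lam (Ordinal N_gt0) (Ordinal n_gt0) (Ordinal T_gt0)).
rewrite obj4_sample_mean.
apply: (wasserstein_dual_bound (@measurable_dist1 R n T) (@measurable_dist1l R n T)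
  (@dist1_ge0 R n T) (@dist1xx R n T) (@dist1_triangle R n T) lam_ge0
  (measurable_Hcost u) (measurable_Xi D u) Hcost_ge0
  (xs := fun l => traj D u (s l)) _ P1_S).
- by move=> xi l; apply: feas4_sample_term_le.
- exact: wasserstein_near_coupling.
Qed.

End finite_sample_guarantee.

Theorem lemma4
  (R : realType) (n m T N : nat)
  (Hn : (0 < n)%N) (HT : (0 < T)%N) (HN : (0 < N)%N)
  (D : netdata R n m)
  (Hgam0 : 0 < gam D ord0)
  (Hgam : forall i j : 'I_m.+1, (i < j)%N -> gam D i < gam D j)
  (Hh : forall e, 0 < hh D e) (Hrhob : forall e, 0 < rhob D e)
  (Hfb : forall e, 0 < fb D e) (Hub : forall e, 0 < ub D e)
  (Hcap : forall e, fb D e < ub D e * rhob D e)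
  (Hetab : 0 < etab D)
  (beta eps : R) (Hbeta : 0 < beta < 1) (Heps : 0 < eps)
  (* the random vector varpi and its law P_varpi *)
  (Pw : probability (Vt R n T) R)
  (HPw_adm : {ae Pw, forall v, admissible v})
  (HPw_LT : exists a : R, 1 < a /\ (\int[Pw]_v (expR (normV v `^ a))%:E < +oo)%E)
  (* N i.i.d. samples varpi^(l) on a probability space (Omega, Prob^N) *)
  (d : measure_display) (Omega : measurableType d) (Q : probability Omega R)
  (varpi : 'I_N -> Omega -> Vt R n T)
  (Hvarpi_meas : forall l, measurable_fun setT (varpi l))
  (Hiid : forall A : 'I_N -> set (Vt R n T), (forall l, measurable (A l)) ->
     Q (\bigcap_(l in [set: 'I_N]) (varpi l @^-1` A l)) = (\prod_(l < N) Pw (A l))%E)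
  (* P(u) is supported on {0 <= rho_e(t) <= rho^c_e(u_e(t))} *)
  (Hsupp : forall u : 'I_n -> 'I_T -> R, (forall e t, exists i, u e t = gam D i) ->
     lawP D Pw u (~` Xi D u) = 0%E)
  (* defining property of the Wasserstein radius eps = epsilon(beta) *)
  (Heps_def : forall u : 'I_n -> 'I_T -> R, (forall e t, exists i, u e t = gam D i) ->
     exists E : set Omega, measurable E /\ ((1 - beta)%:E <= Q E)%E /\
       forall w, E w ->
         in_ball_LT eps (Xi D u) (lawP D Pw u)
           (empirical (fun l => traj D u (varpi l w)))) :
  (* equivalence of (P4) and (P4') *)
  (forall s : 'I_N -> Vt R n T,
     (forall p, optimizer4 D eps s p ->
        forall l e (t : 'I_T), eps <= vrho p l e (tm T t)) ->
     optval4 D eps s = optval4' D eps s /\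
     (forall p, optimizer4 D eps s p <-> exists th, optimizer4' D eps s p th))
  /\
  (* finite-sample guarantee for feasible points of (P4') *)
  (forall x : 'I_n -> 'I_m.+1 -> 'I_T -> R,
     exists E : set Omega, measurable E /\ ((1 - beta)%:E <= Q E)%E /\
       forall w, E w ->
         forall p th, feas4' D (fun l => varpi l w) p th -> vx p = x ->
           ((obj4' D eps p th)%:E <=
              \int[lawP D Pw (uofx D x)]_xi (Hcost (uofx D x) xi)%:E)%E).
Proof.
split=> [s _|x].
  split; [exact: optval4_eq | move=> p; exact: optimizer4P].
(* If [x] encodes no speed limits, no feasible point has [vx p = x]. *)
have [u_gam|u_not_gam] := pselect (forall e t, exists i, uofx D x e t = gam D i); last first.
  exists setT; split; first exact: measurableT.
  split; first by rewrite probability_setT lee_fin gerBl; case/andP: Hbeta => /ltW.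
  move=> w _ p th [hp _] xp; exfalso; apply: u_not_gam; rewrite -xp.
  exact: feas4_speed hp.
have [E [mE [QE E_ball]]] := Heps_def _ u_gam.
exists E; split=> //; split=> // w Ew p th hp' xp; subst x.
apply: le_trans (_ : _ <= (obj4 D eps p)%:E)%E _.
  by rewrite lee_fin; exact: obj4'_le_obj4 hp'.
have [hp _] := hp'.
exact: feas4_obj4_le_expected_cost (E_ball w Ew).
Qed.
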